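(* Define the set of dominant eigenvalues of $J_T$ as $\Lambda_D = \{\lambda_i[J_T] \mid \Re(\lambda_i[W_{\mathrm{out}}W_{\mathrm{in}}])>0\}$. If $\Lambda_D\neq\emptyset$, then the trained reservoir admits a $|\Lambda_D|$-dominant subspace with rate $\lambda = 1-\omega-\varepsilon$, where $0\le\varepsilon<\Re(\mu_{\min})$ and $\mu_{\min}$ is the eigenvalue of $W_{\mathrm{out}}W_{\mathrm{in}}$ with smallest positive real part. Furthermore, $|\Lambda_D|\le d$.
   Context: Consider the untrained linear diagonal continuous-time reservoir $\dot{r}(t) = (-1 + \omega) r(t) + W_{\mathrm{in}} u(t) + \sigma_b \mathbf{1}_n$, with $r(t)\in\mathbb{R}^n$, $u(t)\in\mathbb{R}^d$, $d<n$, $W_{\mathrm{in}}\in\mathbb{R}^{n\times d}$ of full column rank, $\mathbf{1}_n\notin\operatorname{Im}W_{\mathrm{in}}$, $\omega<1$, $\sigma_b\in\mathbb{R}$. It is trained from $r(0)=0$ on generic, informative data: snapshots at equally spaced times form $U\in\mathbb{R}^{d\times m}$ (full row rank) and $R\in\mathbb{R}^{n\times m}$ (full row rank), and $W_{\mathrm{out}} = UR^{\dagger}$ (least squares; $\dagger$ the Moore–Penrose pseudoinverse). The trained closed-loop system is $\dot r = J_T r + \sigma_b\mathbf{1}_n$ with $J_T = (-1+\omega)I + W_{\mathrm{in}}W_{\mathrm{out}}$, assumed diagonalizable and invertible. Then $J_T$ has $n-\operatorname{rank}(W_{\mathrm{out}}W_{\mathrm{in}})\ge n-d$ eigenvalues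 equal to $-1+\omega$ and its remaining (shifted) eigenvalues are $-1+\omega+\lambda_i[W_{\mathrm{out}}W_{\mathrm{in}}]$ for the nonzero eigenvalues of $W_{\mathrm{out}}W_{\mathrm{in}}$. $p$-dominance: a linear system $\dot x = Ax$ is $p$-dominant with rate $\lambda\ge0$ if there is a symmetric matrix $P$ with inertia $(p,0,n-p)$ ($p$ negative, $0$ zero, $n-p$ positive eigenvalues) such that $A^\top P + PA \le -2\lambda P - \varepsilon I$ for some $\varepsilon\ge0$; for $\varepsilon>0$ this is equivalent to $A+\lambda I$ having $p$ eigenvalues with strictly positive real part and $n-p$ with strictly negative real part.
   Formalization: The rate λ = 1 − ω − ε is asserted only for ε ≤ 1 − ω as well as 0 ≤ ε < Re($\mu_{\min}$), and $|\Lambda_D|$ counts, with algebraic multiplicity, the eigenvalues of $W_{\mathrm{out}}W_{\mathrm{in}}$ having positive real part. Each condition added here is assumed in the paper as well or is needed for the statement above to hold. *)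

From HB Require Import structures.
From mathcomp Require Import all_boot all_order all_algebra.
From mathcomp Require Import complex.
Set Implicit Arguments. Unset Strict Implicit. Unset Printing Implicit Defensive.
Import Order.TTheory GRing.Theory Num.Theory.
Local Open Scope ring_scope.

Section Defs.
Variable R : rcfType.

Definition cmx (n : nat) (A : 'M[R]_n) : 'M[R[i]]_n := map_mx (fun x => real_complex R x) A.

(* the eigenvalues of a real square matrix, listed with algebraic multiplicity,
   as the roots (in C) of its characteristic polynomial *)
Definition eigs (n : nat) (A : 'M[R]_n) : seq R[i] :=
  sval (closed_field_poly_normal (char_poly (cmx A))).

Definition moore_penrose (m n : nat) (A : 'M[R]_(m, n)) (X : 'M[R]_(n, m)) : Prop :=
  [/\ A *m X *m A = A, X *m A *m X = X,
      (A *m X)^T = A *m X & (X *m A)^T = X *m A].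

Definition loewner_le (n : nat) (A B : 'M[R]_n) : Prop :=
  forall x : 'cV[R]_n, 0 <= (x^T *m (B - A) *m x) 0 0.

Definition inertia (n : nat) (P : 'M[R]_n) (neg zer pos : nat) : Prop :=
  [/\ count (fun z => z < 0) (eigs P) = neg,
      count (fun z => z == 0) (eigs P) = zer &
      count (fun z => 0 < z) (eigs P) = pos].

(* p-dominance of xdot = A x with rate lambda >= 0 (LMI definition) *)
Definition p_dominant (n : nat) (A : 'M[R]_n) (p : nat) (lambda : R) : Prop :=
  0 <= lambda /\
  exists P : 'M[R]_n, P^T = P /\ inertia P p 0 (n - p) /\
    exists eps : R, 0 <= eps /\
      loewner_le (A^T *m P + P *m A) (- (2 * lambda) *: P - eps%:M).

Definition JT (n d : nat) (omega : R) (Win : 'M[R]_(n, d)) (Wout : 'M[R]_(d, n))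
  : 'M[R]_n := (-1 + omega)%:M + Win *m Wout.

(* |Lambda_D|: number (with multiplicity) of eigenvalues of W_out W_in
   with positive real part *)
Definition n_dominant (d : nat) (M : 'M[R]_d) : nat :=
  count (fun z => 0 < complex.Re z) (eigs M).

End Defs.

(* By Sylvester's determinant identity [y^d det(y - W_in W_out) = y^n det(y - W_out W_in)],
   the spectrum of [J_T = (omega - 1) + W_in W_out] consists of [omega - 1], repeated,
   and the [omega - 1 + mu] for the eigenvalues [mu] of [W_out W_in]; after the shift
   by [lambda = 1 - omega - eps] exactly the [mu] with positive real part are unstable.
   For a real [A = S^-1 diag(d) S] diagonalizable over C, the real symmetric matrix
   [P = Re (S^* W S)], with weight [W_i = -1] on the unstable modes and [+1] on the
   others, satisfies [A^T P + P A <= 0]; it is negative definite on the real unstable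
   eigenspace and positive definite on the stable one, so by Sylvester's law of
   inertia it has exactly as many negative eigenvalues as [A] has unstable modes. *)

From HB Require Import structures.
From mathcomp Require Import all_boot all_order all_algebra.
From mathcomp Require Import complex sesquilinear spectral.
From mathcomp Require Import ring lra zify.
Set Implicit Arguments. Unset Strict Implicit. Unset Printing Implicit Defensive.
Import Order.TTheory GRing.Theory Num.Theory.
Local Open Scope ring_scope.
Local Open Scope sesquilinear_scope.

Lemma char_poly_conjmx (F : fieldType) n (S M : 'M[F]_n) : S \in unitmx ->
  char_poly (invmx S *m M *m S) = char_poly M.
Proof.
move=> Su; rewrite /char_poly /char_poly_mx.
have -> : 'X%:M - map_mx polyC (invmx S *m M *m S) =
    map_mx polyC (invmx S) *m ('X%:M - map_mx polyC M) *m map_mx polyC S.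
  rewrite mulmxBr mulmxBl !map_mxM; congr (_ - _).
  by rewrite mul_mx_scalar -scalemxAl -map_mxM mulVmx // map_mx1 scalemx1.
rewrite !det_mulmx !det_map_mx mulrC mulrA -rmorphM -det_mulmx mulmxV //.
by rewrite det1 rmorph1 mul1r.
Qed.

Lemma mxrank_diag (F : fieldType) n (d : 'rV[F]_n) :
  \rank (diag_mx d) = count (fun i => d 0 i != 0) (enum 'I_n).
Proof.
elim: n d => [|n IHn] d; first by rewrite enum_ord0 flatmx0 mxrank0.
have -> : \rank (diag_mx d) =
    \rank (diag_mx (row_mx (@lsubmx _ 1 1 n d) (rsubmx (d : 'rV_(1 + n))))).
  by rewrite hsubmxK.
rewrite diag_mx_row rank_diag_block_mx IHn enum_ordSl /= count_map.
congr (_ + _)%N; last first.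
  by apply: eq_count => i /=; rewrite mxE; congr (d _ _ != 0); apply: val_inj.
have -> : diag_mx (lsubmx (d : 'rV_(1 + n))) = (d 0 0)%:M.
  apply/matrixP => i j; rewrite !ord1 !mxE /=.
  by congr (d _ _ *+ _); apply: val_inj.
have [->|d0] := eqVneq (d 0 0) 0; first by rewrite raddf0 mxrank0.
by rewrite mxrank_unit // unitmxE det_scalar1 unitfE.
Qed.

Lemma det_sylvester (T : comNzRingType) n d (A : 'M[T]_(n, d)) (B : 'M[T]_(d, n)) y :
  y ^+ d * \det (y%:M - A *m B) = y ^+ n * \det (y%:M - B *m A).
Proof.
pose M := block_mx (y%:M : 'M_n) A B (1%:M : 'M_d).
have EL : block_mx 1%:M (- A) 0 1%:M *m M = block_mx (y%:M - A *m B) 0 B 1%:M.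
  by rewrite mulmx_block !mul1mx !mul0mx mulmx1 !add0r mulNmx addrC subrr addrC.
have ER : block_mx 1%:M 0 (- B) y%:M *m M = block_mx y%:M A 0 (y%:M - B *m A).
  rewrite mulmx_block !mul1mx !mul0mx !addr0 mulmx1 !mulNmx.
  by rewrite mul_mx_scalar mul_scalar_mx addNr addrC.
have /(congr1 determinant) := ER; have /(congr1 determinant) := EL.
rewrite !det_mulmx !det_ublock !det_lblock !det1 !det_scalar !mul1r !mulr1 => ->.
by rewrite mulrC => ->.
Qed.

Lemma capmx_nonzero (F : fieldType) n m1 m2 (A : 'M[F]_(m1, n)) (B : 'M[F]_(m2, n)) :
  (n < \rank A + \rank B)%N -> exists2 x : 'rV_n, x != 0 & (x <= A)%MS && (x <= B)%MS.
Proof.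
move=> ltn; have := mxrank_sum_cap A B; have := rank_leq_col (A + B)%MS => le E.
have : (0 < \rank (A :&: B))%N by lia.
rewrite lt0n mxrank_eq0 -nz_row_eq0 => nz; exists (nz_row (A :&: B))%MS => //.
by rewrite !(submx_trans (nz_row_sub _)) ?capmxSl ?capmxSr.
Qed.

(* The rows of [diag(s <= 0) U] span a space of dimension [#{i | s_i <= 0}]
   on which the form is nonpositive, so it meets [B] trivially. *)
Lemma count_nonpos_add_rank_le (C : numClosedFieldType) n m (U : 'M[C]_n)
    (s : 'rV[C]_n) (B : 'M[C]_(m, n)) : U \is unitarymx ->
  (forall x : 'rV_n, (x <= B)%MS -> x != 0 ->
     0 < (x *m (invmx U *m diag_mx s *m U) *m x ^t*) 0 0) ->
  (count (fun i => s 0 i <= 0)%R (enum 'I_n) + \rank B <= n)%N.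
Proof.
move=> Uu Bpos; rewrite leqNgt; apply/negP => ltn.
pose nonpos (i : 'I_n) := s 0 i <= 0; pose D : 'M[C]_n := diag_mx (\row_i (nonpos i)%:R).
have rkDU : \rank (D *m U) = count nonpos (enum 'I_n).
  rewrite mxrankMfree ?row_free_unit ?unitarymx_unit // mxrank_diag.
  by apply: eq_count => i; rewrite mxE pnatr_eq0; case: (nonpos i).
have [|x x0 /andP[/submxP[c xE] xB]] := @capmx_nonzero _ n _ _ (D *m U) B.
  by rewrite rkDU.
have DC : D ^t* = D.
  rewrite tr_diag_mx map_diag_mx; congr diag_mx.
  by apply/rowP => i; rewrite !mxE rmorph_nat.
have : (c *m (D *m U) *m (invmx U *m diag_mx s *m U) *m (c *m (D *m U)) ^t*) 0 0 <= 0.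
  rewrite invmx_unitary // !trmx_mul !map_mxM !mulmxA !mulmxtVK // DC mxE.
  apply: sumr_le0 => j _; rewrite !mul_mx_diag !mxE /nonpos.
  have [sj|_] := boolP (s 0 j <= 0); last by rewrite !mulr0 mul0r.
  by rewrite !mulr1 mulrAC mulr_ge0_le0 ?mul_conjC_ge0.
by move/le_gtF; rewrite -xE Bpos.
Qed.

Lemma count_sign_eq (T : numDomainType) (s : seq T) (p : nat) :
  {in s, forall x, x \is Num.real} -> (p <= size s)%N ->
  (count (fun x => x <= 0)%R s + (size s - p) <= size s)%N ->
  (count (fun x => 0 <= x)%R s + p <= size s)%N ->
  [/\ count (fun x => x < 0)%R s = p, count (fun x => x == 0) s = 0%N
    & count (fun x => 0 < x)%R s = (size s - p)%N].
Proof.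
move=> sR le_p le_neg le_pos.
have lt_ge : addn (count (fun x => x < 0) s) (count (fun x => 0 <= x) s) = size s.
  rewrite -(count_predC (fun x => x < 0) s); congr addn; apply: eq_in_count => x xs.
  by rewrite /= real_leNgt ?real0 ?sR.
have le_gt : addn (count (fun x => x <= 0) s) (count (fun x => 0 < x) s) = size s.
  rewrite -(count_predC (fun x => x <= 0) s); congr addn; apply: eq_in_count => x xs.
  by rewrite /= real_ltNge ?real0 ?sR.
have le_lt_eq : count (fun x => x <= 0) s =
    addn (count (fun x => x < 0) s) (count (fun x => x == 0) s).
  have disj : count (predI (fun x => x < 0) (fun x => x == 0)) s = 0%N.
    rewrite (eq_count (a2 := pred0)) ?count_pred0 // => x /=.
    by case: (eqVneq x 0) => [->|]; rewrite ?ltxx ?andbF.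
  rewrite -count_predUI disj addn0; apply: eq_count => x /=.
  by rewrite le_eqVlt orbC.
split; lia.
Qed.

Section Eigenvalues.
Variable R : rcfType.
Local Notation C := R[i].
Local Notation toC := (real_complex R).

Lemma eigs_char_poly n (A : 'M[R]_n) :
  char_poly (cmx A) = \prod_(z <- eigs A) ('X - z%:P).
Proof.
rewrite /eigs; case: closed_field_poly_normal => s /= ->.
by rewrite (monicP (char_poly_monic _)) scale1r.
Qed.

Lemma size_eigs n (A : 'M[R]_n) : size (eigs A) = n.
Proof.
by have := size_char_poly (cmx A); rewrite eigs_char_poly size_prod_XsubC => -[].
Qed.

Lemma perm_eigs n (A : 'M[R]_n) (s : seq C) :
  char_poly (cmx A) = \prod_(z <- s) ('X - z%:P) -> perm_eq (eigs A) s.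
Proof. by rewrite eigs_char_poly => /prod_XsubC_eq. Qed.

Lemma eigs_similar_diag n (A : 'M[R]_n) (S : 'M[C]_n) (d : 'rV[C]_n) :
  S \in unitmx -> cmx A = invmx S *m diag_mx d *m S ->
  perm_eq (eigs A) [seq d 0 i | i <- enum 'I_n].
Proof.
move=> Su EA; apply: perm_eigs; rewrite EA char_poly_conjmx //.
rewrite char_poly_trig ?diag_mx_is_trig // big_map big_enum /=.
by apply: eq_bigr => i _; rewrite mxE eqxx mulr1n.
Qed.

Lemma eigs_scalar_add_mulmx n d (A : 'M[R]_(n, d)) (B : 'M[R]_(d, n)) (c : R) :
  perm_eq (nseq d (toC c) ++ eigs (c%:M + A *m B))
          (nseq n (toC c) ++ [seq z + toC c | z <- eigs (B *m A)]).
Proof.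
apply: prod_XsubC_eq; rewrite !big_cat /= !big_nseq big_map !iter_mulr_1.
rewrite -!eigs_char_poly; set Y := 'X - (toC c)%:P.
pose pA := map_mx polyC (map_mx toC A); pose pB := map_mx polyC (map_mx toC B).
have -> : char_poly (cmx (c%:M + A *m B)) = \det (Y%:M - pA *m pB).
  rewrite /char_poly /char_poly_mx /cmx !(map_mxD, map_mxM, map_scalar_mx).
  by rewrite opprD addrA /Y (raddfB (@scalar_mx _ _)).
rewrite det_sylvester; congr (_ * _).
have -> : \det (Y%:M - pB *m pA) = char_poly (cmx (B *m A)) \Po Y.
  rewrite /char_poly -det_map_mx /char_poly_mx map_mxB map_scalar_mx /= comp_polyX.
  congr (\det (_ - _)); rewrite /cmx -map_mx_comp !map_mxM -!map_mx_comp.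
  by congr (_ *m _); apply/matrixP => i j; rewrite !mxE /= comp_polyC.
rewrite eigs_char_poly rmorph_prod /=; apply: eq_bigr => z _.
by rewrite comp_polyB comp_polyX comp_polyC /Y polyCD opprD addrA addrAC.
Qed.

Lemma count_eigs_scalar_add_mulmx n d (A : 'M[R]_(n, d)) (B : 'M[R]_(d, n))
    (c : R) (a : pred C) : ~~ a (toC c) ->
  count a (eigs (c%:M + A *m B)) = count (fun z => a (z + toC c)) (eigs (B *m A)).
Proof.
move=> /negbTE ac; have := permP (eigs_scalar_add_mulmx A B c) a.
by rewrite !count_cat !count_nseq count_map ac !mul0n !add0n.
Qed.

End Eigenvalues.

Section RealComplex.
Variable R : rcfType.
Local Notation C := R[i].
Local Notation toC := (real_complex R).
Local Notation Re := (@complex.Re R).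
Local Notation Im := (@complex.Im R).

Definition Remx m k (M : 'M[C]_(m, k)) : 'M[R]_(m, k) := map_mx Re M.
Definition Immx m k (M : 'M[C]_(m, k)) : 'M[R]_(m, k) := map_mx Im M.
Definition sqrnormc (z : C) : R := Re z ^+ 2 + Im z ^+ 2.

Lemma sqrnormc_ge0 z : 0 <= sqrnormc z.
Proof. by rewrite addr_ge0 ?sqr_ge0. Qed.

Lemma sum_sqrnormc_gt0 n (y : 'cV[C]_n) : y != 0 -> 0 < \sum_i sqrnormc (y i 0).
Proof.
move=> y0; have [i yi0] : exists i, y i 0 != 0.
  apply/existsP; apply: contraR y0; rewrite negb_exists => /forallP y0.
  by apply/eqP/matrixP => i j; rewrite ord1 mxE; apply/eqP/negPn/y0.
rewrite (bigD1 i) //= ltr_wpDr ?sumr_ge0 // => [j _|]; first exact: sqrnormc_ge0.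
move: yi0; case: (y i 0) => a b; rewrite eq_complex negb_and /sqrnormc /= => ab0.
by rewrite lt0r paddr_eq0 ?sqr_ge0 // !sqrf_eq0 negb_and ab0 addr_ge0 ?sqr_ge0.
Qed.

Lemma Remx_cmxMl m k p (A : 'M[R]_(m, k)) (H : 'M[C]_(k, p)) :
  Remx (map_mx toC A *m H) = A *m Remx H.
Proof.
apply/matrixP => i j; rewrite !mxE raddf_sum; apply: eq_bigr => l _.
by rewrite !mxE; case: (H l j) => a b /=; rewrite mul0r subr0.
Qed.

Lemma Remx_cmxMr m k p (H : 'M[C]_(m, k)) (B : 'M[R]_(k, p)) :
  Remx (H *m map_mx toC B) = Remx H *m B.
Proof.
apply/matrixP => i j; rewrite !mxE raddf_sum; apply: eq_bigr => l _.
by rewrite !mxE; case: (H i l) => a b /=; rewrite mulr0 subr0.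
Qed.

Lemma Immx_cmxMr m k p (H : 'M[C]_(m, k)) (B : 'M[R]_(k, p)) :
  Immx (H *m map_mx toC B) = Immx H *m B.
Proof.
apply/matrixP => i j; rewrite !mxE raddf_sum; apply: eq_bigr => l _.
by rewrite !mxE; case: (H i l) => a b /=; rewrite mulr0 add0r.
Qed.

Lemma trmxC_cmx m k (A : 'M[R]_(m, k)) : (map_mx toC A) ^t* = map_mx toC A^T.
Proof. by apply/matrixP => i j; rewrite !mxE; apply: conjc_real. Qed.

Lemma cmx_formE n (P : 'M[R]_n) (x : 'rV[C]_n) : P^T = P ->
  (x *m map_mx toC P *m x ^t*) 0 0 =
  toC ((Remx x *m P *m (Remx x)^T) 0 0 + (Immx x *m P *m (Immx x)^T) 0 0).
Proof.
move=> Psym; have -> : (x *m map_mx toC P *m x ^t*) 0 0 =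
    \sum_j \sum_k x 0 k * toC (P k j) * (x 0 j)^*.
  rewrite mxE; apply: eq_bigr => j _; rewrite mxE big_distrl.
  by apply: eq_bigr => k _; rewrite !mxE.
apply/eqP; rewrite eq_complex /= !raddf_sum !mxE -big_split /=; apply/andP; split.
  apply/eqP/eq_bigr => j _; rewrite !raddf_sum !mxE !big_distrl -big_split /=.
  by apply: eq_bigr => k _; rewrite !mxE; case: (x 0 k) (x 0 j) => a b [c e] /=; ring.
pose f k j := P k j * Im (x 0 k) * Re (x 0 j).
have Imf j k : Im (x 0 k * toC (P k j) * (x 0 j)^*) = f k j - f j k.
  have Pjk : P j k = P k j by rewrite -{1}Psym mxE.
  by rewrite /f Pjk; case: (x 0 k) (x 0 j) => a b [c e] /=; ring.
rewrite (eq_bigr (fun j => \sum_k (f k j - f j k))) => [|j _]; last first.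
  by rewrite raddf_sum; apply: eq_bigr => k _; apply: Imf.
under eq_bigr => j _ do rewrite sumrB.
by rewrite sumrB exchange_big subrr.
Qed.

Lemma Remx_Immx_eq0 m k (M : 'M[C]_(m, k)) : Remx M = 0 -> Immx M = 0 -> M = 0.
Proof.
move=> /matrixP ReM /matrixP ImM; apply/matrixP => i j.
by move: (ReM i j) (ImM i j); rewrite !mxE; case: (M i j) => a b /= -> ->.
Qed.

Lemma cmx_form_gt0 n m (P : 'M[R]_n) (B : 'M[R]_(m, n)) (x : 'rV[C]_n) : P^T = P ->
  (forall a : 'rV[R]_n, (a <= B)%MS -> a != 0 -> 0 < (a *m P *m a^T) 0 0) ->
  (x <= map_mx toC B)%MS -> x != 0 -> 0 < (x *m map_mx toC P *m x ^t*) 0 0.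
Proof.
move=> Psym Bpos /submxP[c ->] x0.
rewrite cmx_formE // Remx_cmxMr Immx_cmxMr -[0]/(toC 0) ltcR.
have ge0 (a : 'rV[R]_n) : (a <= B)%MS -> 0 <= (a *m P *m a^T) 0 0.
  by have [-> _|a0 aB] := eqVneq a 0; [rewrite !mul0mx mxE | exact: ltW (Bpos a aB a0)].
have [a0|a0] := eqVneq (Remx c *m B) 0; last by rewrite ltr_wpDr ?ge0 ?Bpos ?submxMl.
have [b0|b0] := eqVneq (Immx c *m B) 0; last by rewrite ltr_wpDl ?ge0 ?Bpos ?submxMl.
by case/eqP: x0; apply: Remx_Immx_eq0; rewrite ?Remx_cmxMr ?Immx_cmxMr.
Qed.

Lemma inertia_of_definite n (P Bneg Bpos : 'M[R]_n) (p : nat) :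
  P^T = P -> \rank Bneg = p -> \rank Bpos = (n - p)%N ->
  (forall a : 'rV[R]_n, (a <= Bneg)%MS -> a != 0 -> (a *m P *m a^T) 0 0 < 0) ->
  (forall a : 'rV[R]_n, (a <= Bpos)%MS -> a != 0 -> 0 < (a *m P *m a^T) 0 0) ->
  inertia P p 0 (n - p).
Proof.
move=> Psym rkneg rkpos Pneg Ppos.
have Pherm : cmx P \is hermsymmx.
  by apply/is_hermitianmxP; rewrite expr0 scale1r trmxC_cmx Psym.
have /orthomx_spectralP EP := hermitian_normalmx Pherm.
have Uu := spectral_unitarymx (cmx P).
have /mxOverP sp_real := hermitian_spectral_diag_real Pherm.
set U := spectralmx _ in EP Uu; set sp := spectral_diag _ in EP sp_real.
set s := [seq sp 0 i | i <- enum 'I_n].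
have size_s : size s = n by rewrite size_map size_enum_ord.
have p_le_n : (p <= n)%N by rewrite -rkneg rank_leq_col.
have le_neg : (count (fun z => z <= 0)%R s + (n - p) <= n)%N.
  rewrite count_map -rkpos -(mxrank_map toC).
  apply: count_nonpos_add_rank_le Uu _ => x; rewrite -EP; exact: cmx_form_gt0.
have le_pos : (count (fun z => 0 <= z)%R s + p <= n)%N.
  rewrite count_map -rkneg -(mxrank_map toC).
  rewrite -(eq_count (a1 := fun i => (- sp) 0 i <= 0)) => [|i]; last first.
    by rewrite mxE oppr_le0.
  apply: count_nonpos_add_rank_le Uu _ => x.
  rewrite raddfN /= mulmxN mulNmx -EP -map_mxN; apply: cmx_form_gt0.
  - by rewrite raddfN /= Psym.
  - by move=> a aB a0; rewrite mulmxN mulNmx mxE oppr_gt0 Pneg.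
have sR : {in s, forall z, z \is Num.real} by move=> _ /mapP[i _ ->]; apply: sp_real.
rewrite /inertia !(permP (eigs_similar_diag (spectral_unit _) EP)) -/s -size_s.
by apply: count_sign_eq; rewrite ?size_s.
Qed.

Definition weighted_gram n (S : 'M[C]_n) (w : 'I_n -> R) : 'M[R]_n :=
  Remx (S ^t* *m diag_mx (\row_i toC (w i)) *m S).

Lemma weighted_gram_sym n (S : 'M[C]_n) w : (weighted_gram S w)^T = weighted_gram S w.
Proof.
rewrite /weighted_gram; set H := S ^t* *m _ *m S.
have Hherm : H ^t* = H.
  rewrite /H !trmx_mul !map_mxM trmxCK mulmxA tr_diag_mx map_diag_mx.
  by congr (_ *m diag_mx _ *m _); apply/rowP => i; rewrite !mxE; apply: conjc_real.
clearbody H; apply/matrixP => i j; rewrite -[in RHS]Hherm !mxE.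
by case: (H j i).
Qed.

Lemma weighted_gram_bilinE n (S : 'M[C]_n) w (u v : 'cV[R]_n) :
  (u^T *m weighted_gram S w *m v) 0 0 =
  Re (\sum_i ((S *m map_mx toC u) i 0)^* * toC (w i) * (S *m map_mx toC v) i 0).
Proof.
rewrite -Remx_cmxMl -Remx_cmxMr mxE; congr Re.
rewrite -trmxC_cmx !mulmxA -map_mxM -trmx_mul -!mulmxA mulmxA mxE.
by apply: eq_bigr => i _; rewrite mul_mx_diag !mxE mulrC mulrA.
Qed.

Lemma weighted_gram_quadE n (S : 'M[C]_n) w (a : 'rV[R]_n) :
  (a *m weighted_gram S w *m a^T) 0 0 =
  \sum_i w i * sqrnormc ((S *m map_mx toC a^T) i 0).
Proof.
rewrite -{1}[a]trmxK weighted_gram_bilinE raddf_sum; apply: eq_bigr => i _.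
by case: (_ i 0) => x y; rewrite /sqrnormc /=; ring.
Qed.

Lemma weighted_gram_quad_const n (S : 'M[C]_n) w (a : 'rV[R]_n) c :
  (forall i, w i != c -> (S *m map_mx toC a^T) i 0 = 0) ->
  (a *m weighted_gram S w *m a^T) 0 0 = c * \sum_i sqrnormc ((S *m map_mx toC a^T) i 0).
Proof.
move=> supp; rewrite weighted_gram_quadE mulr_sumr; apply: eq_bigr => i _.
have [-> //|wc] := eqVneq (w i) c.
by rewrite supp // /sqrnormc /= expr0n /= addr0 !mulr0.
Qed.

Lemma weighted_gram_lyapE n (A : 'M[R]_n) (S : 'M[C]_n) (d : 'rV[C]_n) w (x : 'cV[R]_n) :
  S \in unitmx -> cmx A = invmx S *m diag_mx d *m S ->
  (x^T *m (A^T *m weighted_gram S w + weighted_gram S w *m A) *m x) 0 0 =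
  \sum_i 2 * w i * Re (d 0 i) * sqrnormc ((S *m map_mx toC x) i 0).
Proof.
move=> Su EA; set P := weighted_gram S w.
have -> : x^T *m (A^T *m P + P *m A) *m x = (A *m x)^T *m P *m x + x^T *m P *m (A *m x).
  by rewrite mulmxDr mulmxDl trmx_mul !mulmxA.
rewrite mxE !weighted_gram_bilinE -raddfD -big_split.
have -> : S *m map_mx toC (A *m x) = diag_mx d *m (S *m map_mx toC x).
  by rewrite map_mxM -[map_mx toC A]/(cmx A) EA -!mulmxA mulKVmx.
set y := S *m _; clearbody y; rewrite raddf_sum; apply: eq_bigr => i _.
rewrite mul_diag_mx !mxE; case: (d 0 i) (y i 0) => a b [c e].
by rewrite /sqrnormc /=; ring.
Qed.

End RealComplex.

Section RealEigenspaces.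
Variable R : rcfType.
Local Notation C := R[i].
Local Notation toC := (real_complex R).
Local Notation Re := (@complex.Re R).

Definition conj_pair_poly n (a : pred R) (d : 'rV[C]_n) : {poly R} :=
  \prod_(i | a (Re (d 0 i))) ('X^2 - (2 * Re (d 0 i)) *: 'X + (sqrnormc (d 0 i))%:P).

Lemma root_conj_pair_poly n (a : pred R) (d : 'rV[C]_n) j :
  ((map_poly toC (conj_pair_poly a d)).[d 0 j] == 0) = a (Re (d 0 j)).
Proof.
have -> : (map_poly toC (conj_pair_poly a d)).[d 0 j] =
    \prod_(i | a (Re (d 0 i))) ((d 0 j - d 0 i) * (d 0 j - (d 0 i)^*)).
  rewrite rmorph_prod horner_prod; apply: eq_bigr => i _.
  rewrite rmorphD rmorphB /= map_polyXn map_polyZ map_polyX map_polyC !hornerE /=.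
  case: (d 0 i) (d 0 j) => x y [u v]; rewrite /sqrnormc /=.
  by apply/eqP; rewrite eq_complex /=; apply/andP; split; apply/eqP; ring.
have [aj|naj] := boolP (a _); first by rewrite (bigD1 j) //= subrr !mul0r eqxx.
apply/negbTE/prodf_neq0 => i ai; rewrite mulf_neq0 // subr_eq0.
  by apply: contraNneq naj => ->.
by apply: contraNneq naj => ->; case: (d 0 i) ai.
Qed.

Definition re_eigenspace n (A : 'M[R]_n.+1) (d : 'rV[C]_n.+1) (a : pred R) :=
  kermx (horner_mx A (conj_pair_poly a d))^T.

Section Diagonalized.
Variables (n : nat) (A : 'M[R]_n.+1) (S : 'M[C]_n.+1) (d : 'rV[C]_n.+1).
Hypotheses (Su : S \in unitmx) (EA : cmx A = invmx S *m diag_mx d *m S).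

Lemma cmx_horner_mx q :
  cmx (horner_mx A q) = invmx S *m diag_mx (map_mx (horner (map_poly toC q)) d) *m S.
Proof. by rewrite /cmx map_horner_mx -/(cmx A) EA horner_mx_uconjC ?horner_mx_diag. Qed.

Lemma mxrank_re_eigenspace a :
  \rank (re_eigenspace A d a) = count (fun i => a (Re (d 0 i))) (enum 'I_n.+1).
Proof.
rewrite mxrank_ker mxrank_tr -(mxrank_map toC) -/(cmx _) cmx_horner_mx.
rewrite mxrankMfree ?row_free_unit // -mxrank_tr trmx_mul mxrankMfree; last first.
  by rewrite row_free_unit unitmx_tr unitmx_inv.
rewrite mxrank_tr mxrank_diag (eq_count (a2 := predC (fun i => a (Re (d 0 i))))).
  by rewrite -{1}(size_enum_ord n.+1) -(count_predC (fun i => a (Re (d 0 i)))) addnK.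
by move=> i /=; rewrite mxE root_conj_pair_poly.
Qed.

Lemma re_eigenspace_coord0 a (v : 'rV[R]_n.+1) i :
  (v <= re_eigenspace A d a)%MS -> ~~ a (Re (d 0 i)) -> (S *m map_mx toC v^T) i 0 = 0.
Proof.
rewrite sub_kermx -root_conj_pair_poly => /eqP v0 nroot.
have : cmx (horner_mx A (conj_pair_poly a d)) *m map_mx toC v^T = 0.
  by rewrite /cmx -map_mxM -[_ *m v^T]trmxK trmx_mul trmxK v0 trmx0 map_mx0.
rewrite cmx_horner_mx -!mulmxA => /(congr1 (mulmx S)); rewrite mulKVmx // mulmx0.
move=> /matrixP /(_ i 0); rewrite mul_diag_mx !mxE => /eqP.
by rewrite mulf_eq0 (negbTE nroot) => /eqP.
Qed.

End Diagonalized.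

End RealEigenspaces.

Section Lyapunov.
Variable R : rcfType.
Local Notation C := R[i].
Local Notation toC := (real_complex R).
Local Notation Re := (@complex.Re R).

Lemma similar_diag_lyapunov n (A : 'M[R]_n.+1) (S : 'M[C]_n.+1) (d : 'rV[C]_n.+1) :
  S \in unitmx -> cmx A = invmx S *m diag_mx d *m S ->
  let p := count (fun i => 0 < Re (d 0 i)) (enum 'I_n.+1) in
  exists P : 'M[R]_n.+1, [/\ P^T = P, inertia P p 0 (n.+1 - p) &
    forall x : 'cV_n.+1, (x^T *m (A^T *m P + P *m A) *m x) 0 0 <= 0].
Proof.
move=> Su EA p; pose w i : R := if 0 < Re (d 0 i) then -1 else 1.
have quad_gt0 (a : 'rV[R]_n.+1) :
    a != 0 -> 0 < \sum_i sqrnormc ((S *m map_mx toC a^T) i 0).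
  move=> a0; apply: sum_sqrnormc_gt0; apply: contra a0 => /eqP Sa0.
  have /eqP : map_mx toC a^T = 0 by rewrite -(mulKmx Su (map_mx toC a^T)) Sa0 mulmx0.
  by rewrite map_mx_eq0 -trmx0 => /eqP /trmx_inj ->.
exists (weighted_gram S w); split; first exact: weighted_gram_sym.
  apply: (inertia_of_definite (Bneg := re_eigenspace A d (fun r => 0 < r))
                              (Bpos := re_eigenspace A d (fun r => ~~ (0 < r)))).
  - exact: weighted_gram_sym.
  - exact: mxrank_re_eigenspace Su EA _.
  - rewrite (mxrank_re_eigenspace Su EA) -[in (n.+1 - _)%N](size_enum_ord n.+1).
    by rewrite -(count_predC (fun i => 0 < Re (d 0 i))) addKn.
  - move=> a aB a0; rewrite (weighted_gram_quad_const (c := -1)) => [|i].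
      by rewrite mulN1r oppr_lt0 quad_gt0.
    rewrite /w; case: ifP => [_|npos _]; first by rewrite eqxx.
    by apply: (re_eigenspace_coord0 Su EA aB); rewrite npos.
  - move=> a aB a0; rewrite (weighted_gram_quad_const (c := 1)) => [|i].
      by rewrite mul1r quad_gt0.
    rewrite /w; case: ifP => [pos _|]; last by rewrite eqxx.
    by apply: (re_eigenspace_coord0 Su EA aB); rewrite pos.
move=> x; rewrite (weighted_gram_lyapE _ _ Su EA); apply: sumr_le0 => i _.
have := sqrnormc_ge0 ((S *m map_mx toC x) i 0); rewrite /w.
by case: ifP => [pos|/negbT]; [nra | rewrite -leNgt; nra].
Qed.

Lemma p_dominant_of_lyapunov n (J P : 'M[R]_n) (p : nat) (lambda : R) :
  0 <= lambda -> P^T = P -> inertia P p 0 (n - p) ->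
  (forall x : 'cV_n,
     (x^T *m ((J + lambda%:M)^T *m P + P *m (J + lambda%:M)) *m x) 0 0 <= 0) ->
  p_dominant J p lambda.
Proof.
move=> lam0 Psym Pin Plyap; split => //; exists P; split => //; split => //.
exists 0; split => // x.
have -> : - (2 * lambda) *: P - 0%:M - (J^T *m P + P *m J) =
    - ((J + lambda%:M)^T *m P + P *m (J + lambda%:M)).
  rewrite [(J + _)^T]linearD /= tr_scalar_mx mulmxDl mulmxDr.
  rewrite mul_scalar_mx mul_mx_scalar raddf0.
  by move: (J^T *m P) (P *m J) => X Y; apply/matrixP => i j; rewrite !mxE; ring.
by rewrite mulmxN mulNmx mxE oppr_ge0 Plyap.
Qed.

Lemma diagonalizable_p_dominant n (J : 'M[R]_n) (lambda : R) :
  diagonalizable (cmx J) -> 0 <= lambda ->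
  p_dominant J (count (fun z => 0 < Re z + lambda) (eigs J)) lambda.
Proof.
case: n J => [|n] J diagJ lam0.
  have eigs0 (A : 'M[R]_0) : eigs A = [::] by apply: size0nil; rewrite size_eigs.
  apply: (p_dominant_of_lyapunov (P := 0)); rewrite ?trmx0 //.
    by rewrite /inertia !eigs0.
  by move=> x; rewrite mxE big_ord0.
case: diagJ => S Su /(similar_diagLR Su) [D]; rewrite conjVmx // => ED.
pose d := \row_i (D 0 i + toC lambda).
have EA : cmx (J + lambda%:M) = invmx S *m diag_mx d *m S.
  have -> : diag_mx d = diag_mx D + (toC lambda)%:M.
    by apply/matrixP => i j; rewrite !mxE mulrnDl.
  rewrite /cmx map_mxD map_scalar_mx -/(cmx J) ED mulmxDr mulmxDl mul_mx_scalar.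
  by rewrite -scalemxAl mulVmx // scalemx1.
have [P [Psym Pin Plyap]] := similar_diag_lyapunov Su EA.
apply: (p_dominant_of_lyapunov lam0 Psym _ Plyap).
rewrite (permP (eigs_similar_diag Su ED)) count_map.
rewrite (eq_count (a2 := fun i => 0 < Re (d 0 i))) // => i.
by rewrite /= mxE; case: (D 0 i).
Qed.

End Lyapunov.

Theorem corollary1 (R : rcfType) (n d m : nat)
  (Win : 'M[R]_(n, d)) (U : 'M[R]_(d, m)) (Rr : 'M[R]_(n, m))
  (Rdag : 'M[R]_(m, n)) (Wout : 'M[R]_(d, n)) (omega sigma_b : R) :
  (d < n)%N ->
  \rank Win = d ->
  ~ (exists v : 'cV[R]_d, Win *m v = const_mx 1) ->
  omega < 1 ->
  \rank U = d ->
  \rank Rr = n ->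
  moore_penrose Rr Rdag ->
  Wout = U *m Rdag ->
  diagonalizable (cmx (JT omega Win Wout)) ->
  JT omega Win Wout \in unitmx ->
  (0 < n_dominant (Wout *m Win))%N ->
  (forall mu_min : R[i],
     mu_min \in eigs (Wout *m Win) -> 0 < complex.Re mu_min ->
     (forall z, z \in eigs (Wout *m Win) -> 0 < complex.Re z -> complex.Re mu_min <= complex.Re z) ->
     forall eps : R, 0 <= eps -> eps < complex.Re mu_min -> eps <= 1 - omega ->
       p_dominant (JT omega Win Wout) (n_dominant (Wout *m Win)) (1 - omega - eps))
  /\ (n_dominant (Wout *m Win) <= d)%N.
Proof.
move=> _ _ _ _ _ _ _ _ diagJ _ _; split; last first.
  by rewrite /n_dominant (leq_trans (count_size _ _)) ?size_eigs.
move=> mu _ _ mu_min eps eps0 eps_mu eps_le.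
have lam0 : 0 <= 1 - omega - eps by lra.
suff <- : count (fun z => 0 < complex.Re z + (1 - omega - eps)) (eigs (JT omega Win Wout))
    = n_dominant (Wout *m Win) by exact: diagonalizable_p_dominant.
rewrite count_eigs_scalar_add_mulmx /=; last by lra.
apply: eq_in_count => z z_eig /=; have := mu_min z z_eig.
case: z z_eig => a b _ /= min_a; apply/idP/idP => [|/min_a]; lra.
Qed.
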